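(* Let $f(\alpha,\beta)$, $g(\alpha,\beta)$, $h(\alpha)$ be functions that are $2\pi$-periodic in each argument and satisfy $f(\alpha,\beta)=-f(\beta,\alpha)$ and $g(\alpha,\beta)=-g(\beta,\alpha)$. Consider the quad-equation on a rhombus with black vertices $x_0,x_{12}$ and white vertices $x_1,x_2$, where $x_1-x_0=e^{i\alpha}$, $x_2-x_0=e^{i\beta}$ (as points of $\mathbb C$), written in its four ''centered'' forms \begin{align*} (E_0)&\quad f(\alpha,\beta)x_{12}-g(\alpha,\beta)x_0=i\big(h(\beta)x_2-h(\alpha)x_1\big),\\ (E_{12})&\quad f(\alpha+\pi,\beta+\pi)x_0-g(\alpha+\pi,\beta+\pi)x_{12}=i\big(h(\beta+\pi)x_1-h(\alpha+\pi)x_2\big),\\ (E_1)&\quad f(\beta+\pi,\alpha)x_2-g(\beta+\pi,\alpha)x_1=i\big(h(\alpha)x_0-h(\beta+\pi)x_{12}\big),\\ (E_2)&\quad f(\alpha+\pi,\beta)x_1-g(\alpha+\pi,\beta)x_2=i\big(h(\beta)x_0-h(\alpha+\pi)x_{12}\big). \end{align*} The quad-equation is symmetric with respect to centering the quad at any of its four vertices (i.e., for all $\alpha,\beta$ the four linear equations $(E_0),(E_{12}),(E_1),(E_2)$ in $x_0,x_1,x_2,x_{12}$ have proportional coefficient vectors) if and only if there is a constant $c\neq0$ such that for all $\alpha,\beta$ $$h(\alpha)h(\alpha+\pi)=c,\qquad f(\alpha,\beta)f(\alpha+\pi,\beta)=-c,\qquad g(\alpha,\beta)=c^{-1}f(\alpha,\beta)h(\alpha)h(\beta).$$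 Moreover, these conditions together with the skew-symmetry of $f$ imply $f(\alpha,\beta)=f(\alpha+\pi,\beta+\pi)$.
   Context: The quad-equations live on a bipartite quad-graph rhombically embedded in $\mathbb C$ (all faces are rhombi with unit sides), with black and white vertices; edges are directed from black to white and labelled by $\alpha$ where $e^{i\alpha}$ is the edge vector. Opposite edges of a face, directed black-to-white, carry labels differing by $\pi$. *)

From Stdlib Require Import Reals ZArith.
From Coquelicot Require Import Coquelicot.
Open Scope R_scope.

(* Coefficient vectors of linear equations in (x0, x1, x2, x12). *)
Definition vec4 := (C * C * C * C)%type.

Definition vscale (l : C) (u : vec4) : vec4 :=
  match u with (a, b, c, d) => (l * a, l * b, l * c, l * d)%C end.

Definition proportional (u v : vec4) : Prop :=
  exists l : C, l <> 0%C /\ v = vscale l u.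

Definition vnonzero (u : vec4) : Prop := u <> (RtoC 0, RtoC 0, RtoC 0, RtoC 0).

(* Non-degenerate rhombus: e^{i alpha} and e^{i beta} not collinear. *)
Definition admissible (a b : R) : Prop := forall k : Z, b - a <> IZR k * PI.

Section Eqs.
Variables (f g : R -> R -> C) (h : R -> C).

(* Coefficient vectors, ordered (x0, x1, x2, x12), of the equation written
   as  LHS - RHS = 0. *)
Definition E0 (a b : R) : vec4 :=
  (- g a b, Ci * h a, - (Ci * h b), f a b)%C.
Definition E12 (a b : R) : vec4 :=
  (f (a + PI) (b + PI), - (Ci * h (b + PI)), Ci * h (a + PI),
   - g (a + PI) (b + PI))%C.
Definition E1 (a b : R) : vec4 :=
  (- (Ci * h a), - g (b + PI) a, f (b + PI) a, Ci * h (b + PI))%C.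
Definition E2 (a b : R) : vec4 :=
  (- (Ci * h b), f (a + PI) b, - g (a + PI) b, Ci * h (a + PI))%C.

Definition centering_symmetric : Prop :=
  forall a b : R, admissible a b ->
    vnonzero (E0 a b) /\
    proportional (E0 a b) (E12 a b) /\
    proportional (E0 a b) (E1 a b) /\
    proportional (E0 a b) (E2 a b).

Definition sym_conditions (c : C) : Prop :=
  (forall a : R, (h a * h (a + PI) = c)%C) /\
  (forall a b : R, admissible a b -> (f a b * f (a + PI) b = - c)%C) /\
  (forall a b : R, admissible a b -> g a b = (/ c * f a b * h a * h b)%C).
End Eqs.

(** Comparing the entries of [E0] and [E12] shows that [h a h(a+pi)] takes
    the same value at the two angles of every non-degenerate rhombus, hence
    is a constant [c]; the entries of [E2] then give [f(a,b) f(a+pi,b) = -c]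
    and [g(a,b) h(a+pi) = f(a,b) h(b)], i.e. the formula for [g], and
    non-degeneracy of [E0] forces [c <> 0].  Conversely, the conditions
    express every shifted coefficient through [c], [f(a,b)], [h a], [h b]
    (skew-symmetry of [f] turns [f(b+pi,a)] into [c / f(a,b)]), so the
    proportionality factors can be written down explicitly. *)

From Pilot Require Import Defs.
From Stdlib Require Import Reals ZArith Lra Lia Classical.
From Coquelicot Require Import Coquelicot.
Open Scope R_scope.

Lemma Ci_sqr : (Ci * Ci = - 1)%C.
Proof. apply injective_projections; simpl; ring. Qed.

Lemma Cmult_cancel_l (l : C) {x y : C} : l <> 0%C -> (l * x = l * y)%C -> x = y.
Proof.
  intros Hl E.
  replace x with (/ l * (l * x))%C by (field; exact Hl).
  rewrite E; field; exact Hl.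
Qed.

Lemma Cmult_neq_0_inv (x y : C) : (x * y)%C <> 0%C -> x <> 0%C /\ y <> 0%C.
Proof.
  intros Hxy; split; intros E; apply Hxy; rewrite E; ring.
Qed.

Lemma Copp_neq_0 (x : C) : x <> 0%C -> (- x)%C <> 0%C.
Proof.
  intros Hx E; apply Hx.
  replace x with (- - x)%C by ring.
  rewrite E; ring.
Qed.

Lemma Cdiv_neq_0 (x y : C) : x <> 0%C -> y <> 0%C -> (x / y)%C <> 0%C.
Proof.
  intros Hx Hy E; apply Hx.
  replace x with (x / y * y)%C by (field; exact Hy).
  rewrite E; ring.
Qed.

Lemma proportional_vec4 (a b c d a' b' c' d' : C) :
  proportional (a, b, c, d) (a', b', c', d') ->
  exists l : C, l <> 0%C /\
    a' = (l * a)%C /\ b' = (l * b)%C /\ c' = (l * c)%C /\ d' = (l * d)%C.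
Proof.
  intros [l [Hl E]]; exists l; split; [exact Hl|].
  change ((a', b', c', d') = ((l * a)%C, (l * b)%C, (l * c)%C, (l * d)%C)) in E.
  inversion E; repeat split.
Qed.

Lemma proportional_intro (l a b c d a' b' c' d' : C) : l <> 0%C ->
  a' = (l * a)%C -> b' = (l * b)%C -> c' = (l * c)%C -> d' = (l * d)%C ->
  proportional (a, b, c, d) (a', b', c', d').
Proof. intros Hl -> -> -> ->; exists l; split; [exact Hl | reflexivity]. Qed.

Lemma vnonzero_second (a b c d : C) : b <> 0%C -> vnonzero (a, b, c, d).
Proof.
  intros Hb E; apply Hb.
  exact (f_equal (fun v : vec4 => snd (fst (fst v))) E).
Qed.

Lemma admissible_sym a b : admissible a b -> admissible b a.
Proof. intros H k Hk; apply (H (- k)%Z); rewrite opp_IZR; lra. Qed.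

Lemma admissible_shift_l a b : admissible a b -> admissible (a + PI) b.
Proof. intros H k Hk; apply (H (k + 1)%Z); rewrite plus_IZR; lra. Qed.

Lemma admissible_shift_r a b : admissible a b -> admissible a (b + PI).
Proof. intros H k Hk; apply (H (k - 1)%Z); rewrite minus_IZR; lra. Qed.

Lemma IZR_neq_half (k : Z) : IZR k <> / 2.
Proof.
  intros H.
  assert (E : IZR (2 * k) = IZR 1) by (rewrite mult_IZR, H; simpl; lra).
  apply eq_IZR in E; lia.
Qed.

Lemma admissible_multiple_pi_half_pi (k : Z) : admissible (IZR k * PI) (PI / 2).
Proof.
  intros j Hj; apply (IZR_neq_half (j + k)); rewrite plus_IZR.
  apply (Rmult_eq_reg_r PI); [lra | pose proof PI_RGT_0; lra].
Qed.

Lemma admissible_0_half_pi : admissible 0 (PI / 2).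
Proof.
  rewrite <- (Rmult_0_l PI); exact (admissible_multiple_pi_half_pi 0).
Qed.

(* An angle not admissible with [0] is a multiple of [pi], and is then
   admissible with [pi/2], as [0] is. *)
Lemma admissible_invariant_constant (P : R -> C) :
  (forall a b, admissible a b -> P a = P b) -> forall a, P a = P 0.
Proof.
  intros HP a.
  destruct (classic (admissible 0 a)) as [Ha | Ha].
  - symmetry; exact (HP 0 a Ha).
  - apply not_all_ex_not in Ha as [k Hk]; apply NNPP in Hk.
    replace a with (IZR k * PI) by lra.
    rewrite (HP _ _ (admissible_multiple_pi_half_pi k)).
    symmetry; exact (HP _ _ admissible_0_half_pi).
Qed.

Section CenteringToConditions.
Variables (f g : R -> R -> C) (h : R -> C).

Lemma proportional_E12_h_product a b :
  proportional (E0 f g h a b) (E12 f g h a b) ->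
  (h a * h (a + PI) = h b * h (b + PI))%C.
Proof.
  intros [l [_ [_ [Hb [Hc _]]]]]%proportional_vec4.
  apply (Cmult_cancel_l (Ci * Ci)); [exact (Cmult_neq_0 _ _ Ci_nz Ci_nz)|].
  replace (Ci * Ci * (h a * h (a + PI)))%C
    with (Ci * h a * (Ci * h (a + PI)))%C by ring.
  replace (Ci * Ci * (h b * h (b + PI)))%C
    with (- (Ci * h b * - (Ci * h (b + PI))))%C by ring.
  rewrite Hb, Hc; ring.
Qed.

Lemma proportional_E2_f_product a b :
  proportional (E0 f g h a b) (E2 f g h a b) ->
  (f a b * f (a + PI) b = - (h a * h (a + PI)))%C.
Proof.
  intros [l [_ [_ [Hb [_ Hd]]]]]%proportional_vec4.
  rewrite Hb.
  replace (f a b * (l * (Ci * h a)))%C with (l * f a b * (Ci * h a))%C by ring.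
  rewrite <- Hd; ring [Ci_sqr].
Qed.

Lemma proportional_E2_g_relation a b :
  proportional (E0 f g h a b) (E2 f g h a b) ->
  (g a b * h (a + PI) = f a b * h b)%C.
Proof.
  intros [l [_ [Ha [_ [_ Hd]]]]]%proportional_vec4.
  apply (Cmult_cancel_l Ci Ci_nz).
  replace (Ci * (g a b * h (a + PI)))%C with (g a b * (Ci * h (a + PI)))%C
    by ring.
  replace (Ci * (f a b * h b))%C with (- (f a b * - (Ci * h b)))%C by ring.
  rewrite Hd, Ha; ring.
Qed.

Lemma centering_h_product_neq_0 a b :
  vnonzero (E0 f g h a b) ->
  proportional (E0 f g h a b) (E12 f g h a b) ->
  proportional (E0 f g h a b) (Defs.E1 f g h a b) ->
  proportional (E0 f g h a b) (E2 f g h a b) ->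
  (h a * h (a + PI))%C <> 0%C.
Proof.
  intros Hnz [l [Hl [_ [H12b [H12c _]]]]]%proportional_vec4
    [l1 [Hl1 [H1a [_ [_ H1d]]]]]%proportional_vec4
    [l2 [Hl2 [H2a [_ [_ H2d]]]]]%proportional_vec4 HP.
  assert (Hg_ha : g a b = 0%C -> h a = 0%C).
  { intros Hg; apply (Cmult_cancel_l Ci Ci_nz).
    transitivity (- - (Ci * h a))%C; [ring|]; rewrite H1a, Hg; ring. }
  assert (Hha_g : h a = 0%C -> g a b = 0%C).
  { intros Hha; apply (Cmult_cancel_l l1 Hl1).
    transitivity (- (l1 * - g a b))%C; [ring|]; rewrite <- H1a, Hha; ring. }
  assert (Hg_hb : g a b = 0%C -> h b = 0%C).
  { intros Hg; apply (Cmult_cancel_l Ci Ci_nz).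
    transitivity (- - (Ci * h b))%C; [ring|]; rewrite H2a, Hg; ring. }
  assert (Hhb_g : h b = 0%C -> g a b = 0%C).
  { intros Hhb; apply (Cmult_cancel_l l2 Hl2).
    transitivity (- (l2 * - g a b))%C; [ring|]; rewrite <- H2a, Hhb; ring. }
  (* A zero of [h a] or [h (a + PI)] propagates to every entry of [E0]. *)
  apply Hnz; unfold E0.
  destruct (classic (h a = 0%C)) as [Hha | Hha].
  - assert (Hf : f a b = 0%C).
    { apply (Cmult_cancel_l l1 Hl1); rewrite <- H1d.
      transitivity (- - (Ci * h (b + PI)))%C; [ring|]; rewrite H12b, Hha; ring. }
    rewrite Hf, (Hg_hb (Hha_g Hha)), (Hha_g Hha), Hha.
    repeat f_equal; ring.
  - assert (HhA : h (a + PI) = 0%C).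
    { apply NNPP; intros HhA; exact (Cmult_neq_0 _ _ Hha HhA HP). }
    assert (Hf : f a b = 0%C).
    { apply (Cmult_cancel_l l2 Hl2); rewrite <- H2d, HhA; ring. }
    assert (Hhb : h b = 0%C).
    { apply (Cmult_cancel_l (l * Ci)); [exact (Cmult_neq_0 _ _ Hl Ci_nz)|].
      transitivity (- (l * - (Ci * h b)))%C; [ring|].
      rewrite <- H12c, HhA; ring. }
    exfalso; exact (Hha (Hg_ha (Hhb_g Hhb))).
Qed.

Lemma centering_symmetric_sym_conditions :
  centering_symmetric f g h ->
  exists c : C, c <> 0%C /\ sym_conditions f g h c.
Proof.
  intros HS.
  set (P a := (h a * h (a + PI))%C).
  assert (HP : forall a, P a = P 0).
  { apply admissible_invariant_constant; intros a b Hab.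
    exact (proportional_E12_h_product a b (proj1 (proj2 (HS a b Hab)))). }
  assert (HP0 : P 0 <> 0%C).
  { destruct (HS 0 (PI / 2) admissible_0_half_pi) as [H0 [H12 [H1 H2]]].
    exact (centering_h_product_neq_0 0 (PI / 2) H0 H12 H1 H2). }
  exists (P 0); split; [exact HP0 | split; [|split]].
  - exact HP.
  - intros a b Hab; rewrite <- (HP a).
    exact (proportional_E2_f_product a b (proj2 (proj2 (proj2 (HS a b Hab))))).
  - intros a b Hab; rewrite <- (HP a).
    assert (E := proportional_E2_g_relation a b
                   (proj2 (proj2 (proj2 (HS a b Hab))))).
    rewrite <- (HP a) in HP0; unfold P in HP0 |- *.
    destruct (Cmult_neq_0_inv _ _ HP0) as [Hha HhA].
    apply (Cmult_cancel_l (h (a + PI)) HhA).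
    transitivity (g a b * h (a + PI))%C; [ring|].
    rewrite E; field; split; assumption.
Qed.

End CenteringToConditions.

Section ConditionsToCentering.
Variables (f g : R -> R -> C) (h : R -> C) (c : C).
Hypothesis Hfskew : forall a b, f a b = (- f b a)%C.
Hypothesis Hc : c <> 0%C.
Hypothesis Hsym : sym_conditions f g h c.

Let Hg : forall a b, admissible a b -> g a b = (/ c * f a b * h a * h b)%C :=
  proj2 (proj2 Hsym).

Lemma sym_conditions_h_neq_0 x : h x <> 0%C.
Proof.
  intros E; apply Hc; rewrite <- (proj1 Hsym x), E; ring.
Qed.

Lemma sym_conditions_h_shift x : h (x + PI) = (c / h x)%C.
Proof.
  rewrite <- (proj1 Hsym x); field; exact (sym_conditions_h_neq_0 x).
Qed.

Lemma sym_conditions_f_neq_0 a b : admissible a b -> f a b <> 0%C.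
Proof.
  intros Hab E; apply Hc.
  replace c with (- (f a b * f (a + PI) b))%C
    by (rewrite (proj1 (proj2 Hsym) a b Hab); ring).
  rewrite E; ring.
Qed.

Lemma sym_conditions_f_shift_l a b : admissible a b ->
  f (a + PI) b = (- c / f a b)%C.
Proof.
  intros Hab; rewrite <- (proj1 (proj2 Hsym) a b Hab).
  field; exact (sym_conditions_f_neq_0 a b Hab).
Qed.

Lemma sym_conditions_f_shift_swap a b : admissible a b ->
  f (b + PI) a = (c / f a b)%C.
Proof.
  intros Hab.
  rewrite (sym_conditions_f_shift_l b a (admissible_sym a b Hab)), (Hfskew a b).
  field; exact (sym_conditions_f_neq_0 b a (admissible_sym a b Hab)).
Qed.

Lemma sym_conditions_f_shift_both a b : admissible a b ->
  f (a + PI) (b + PI) = f a b.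
Proof.
  intros Hab.
  rewrite (sym_conditions_f_shift_l a (b + PI) (admissible_shift_r a b Hab)).
  rewrite (Hfskew a (b + PI)), (sym_conditions_f_shift_swap a b Hab).
  field; split; [exact (sym_conditions_f_neq_0 a b Hab) | exact Hc].
Qed.

Lemma sym_conditions_proportional_E12 a b : admissible a b ->
  proportional (E0 f g h a b) (E12 f g h a b).
Proof.
  intros Hab; unfold E0, E12.
  rewrite (Hg a b Hab),
    (Hg _ _ (admissible_shift_l _ _ (admissible_shift_r a b Hab))),
    (sym_conditions_f_shift_both a b Hab), !sym_conditions_h_shift.
  assert (Hha := sym_conditions_h_neq_0 a).
  assert (Hhb := sym_conditions_h_neq_0 b).
  apply (proportional_intro (- c / (h a * h b))%C).
  - exact (Cdiv_neq_0 _ _ (Copp_neq_0 _ Hc) (Cmult_neq_0 _ _ Hha Hhb)).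
  all: field; auto.
Qed.

Lemma sym_conditions_proportional_E1 a b : admissible a b ->
  proportional (E0 f g h a b) (Defs.E1 f g h a b).
Proof.
  intros Hab; unfold E0, Defs.E1.
  rewrite (Hg a b Hab),
    (Hg _ _ (admissible_shift_l _ _ (admissible_sym a b Hab))),
    (sym_conditions_f_shift_swap a b Hab), !sym_conditions_h_shift.
  assert (Hf := sym_conditions_f_neq_0 a b Hab).
  assert (Hhb := sym_conditions_h_neq_0 b).
  apply (proportional_intro (Ci * c / (f a b * h b))%C).
  - exact (Cdiv_neq_0 _ _ (Cmult_neq_0 _ _ Ci_nz Hc) (Cmult_neq_0 _ _ Hf Hhb)).
  all: field [Ci_sqr]; auto.
Qed.

Lemma sym_conditions_proportional_E2 a b : admissible a b ->
  proportional (E0 f g h a b) (E2 f g h a b).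
Proof.
  intros Hab; unfold E0, E2.
  rewrite (Hg a b Hab), (Hg _ _ (admissible_shift_l a b Hab)),
    (sym_conditions_f_shift_l a b Hab), !sym_conditions_h_shift.
  assert (Hf := sym_conditions_f_neq_0 a b Hab).
  assert (Hha := sym_conditions_h_neq_0 a).
  apply (proportional_intro (Ci * c / (f a b * h a))%C).
  - exact (Cdiv_neq_0 _ _ (Cmult_neq_0 _ _ Ci_nz Hc) (Cmult_neq_0 _ _ Hf Hha)).
  all: field [Ci_sqr]; auto.
Qed.

Lemma sym_conditions_centering_symmetric : centering_symmetric f g h.
Proof.
  intros a b Hab; split; [|split; [|split]].
  - apply vnonzero_second, (Cmult_neq_0 _ _ Ci_nz), sym_conditions_h_neq_0.
  - exact (sym_conditions_proportional_E12 a b Hab).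
  - exact (sym_conditions_proportional_E1 a b Hab).
  - exact (sym_conditions_proportional_E2 a b Hab).
Qed.

End ConditionsToCentering.

Theorem lemma1 (f g : R -> R -> C) (h : R -> C)
  (Hf1 : forall a b, f (a + 2 * PI) b = f a b)
  (Hf2 : forall a b, f a (b + 2 * PI) = f a b)
  (Hg1 : forall a b, g (a + 2 * PI) b = g a b)
  (Hg2 : forall a b, g a (b + 2 * PI) = g a b)
  (Hh : forall a, h (a + 2 * PI) = h a)
  (Hfskew : forall a b, f a b = (- f b a)%C)
  (Hgskew : forall a b, g a b = (- g b a)%C) :
  (centering_symmetric f g h <->
     exists c : C, c <> 0%C /\ sym_conditions f g h c) /\
  (forall c : C, c <> 0%C -> sym_conditions f g h c ->
     forall a b, admissible a b -> f a b = f (a + PI) (b + PI)).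
Proof.
  split; [split|].
  - apply centering_symmetric_sym_conditions.
  - intros [c [Hc Hsym]].
    exact (sym_conditions_centering_symmetric f g h c Hfskew Hc Hsym).
  - intros c Hc Hsym a b Hab; symmetry.
    exact (sym_conditions_f_shift_both f g h c Hfskew Hc Hsym a b Hab).
Qed.
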